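(* Let $(\mathbf{i},\kappa)$ be an idempotent datum as in the context. Then $(\mathbf{i},\kappa)$ admits a compatible metric longitude if and only if it is a parity idempotent datum.
   Context: $I$ is the vertex set of a finite simple bipartite graph, $I=I_{\bar0}\sqcup I_{\bar1}$; an integer $k$ has the parity of $i$ if $k\bmod2$ equals the parity of $i$. Fix a total order $v_1<\dots<v_r$ on $I$ with all even vertices first. Let $\mathbf{R}=(R_i)_{i\in I}$ where $R_i$ is a finite multiset of integers of the parity of $i$ ($\lambda_i=|R_i|$, $\ell=\sum_i\lambda_i$). With $\rho_i(q)$ the multiplicity of $2q$ (i even) or $2q+1$ (i odd) in $R_i$, form the sequence of labels $(j_1,\dots,j_\ell)$ as the concatenation over increasing $q\in\mathbb{Z}$ of blocks ($v_1$ repeated $\rho_{v_1}(q)$ times, …, $v_r$ repeated $\rho_{v_r}(q)$ times); the $p$-th red strand has label $j_p$ and longitude $r_p$, the corresponding element of $R_{j_p}$ (so $r_1\le\dots\le r_\ell$). An idempotent datum is $(\mathbf{i},\kappa)$ with $\mathbf{i}=(i_1,\dots,i_n)\in I^n$ (labels of black strands) and $\kappa:\{1,\dots,\ell\}\to\{0,\dots,n\}$ weakly increasing; it describes a left-to-right sequence of strands in which red strand $p$ lies between the $\kappa(p)$-th and $(\kappa(p)+1)$-st black strands. Each strand has the parity of its label. Parity distance: for consecutive strands $s$ left of $s'$, $\delta(s,s')=2$ if $s$ is black, $s'$ is red and they have the same parity; $1$ if they have different parities; $0$ otherwise; for $s$ left of $s'$ non-consecutive, $\delta(s,s')$ is the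 sum over consecutive pairs between them. $(\mathbf{i},\kappa)$ is parity if $\delta(p,p')\le|r_p-r_{p'}|$ for every pair of red strands $p$ left of $p'$. A compatible metric longitude is $\mathbf{a}=(a_1,\dots,a_n)\in\mathbb{Z}^n$ with (1) $a_k$ of the parity of $i_k$, (2) $a_k\le a_{k+1}$, (3) for all $k,p$: $a_k\ge r_p$ if and only if $k>\kappa(p)$. *)

From mathcomp Require Import all_boot all_order all_algebra.
Set Implicit Arguments. Unset Strict Implicit. Unset Printing Implicit Defensive.
Import Order.TTheory GRing.Theory Num.Theory.

(* Conventions:
   - The vertex set I with its fixed total order v_1 < ... < v_r is 'I_r
     (with the natural order of ordinals); [par v] is true iff v is odd.
   - Integers have parity [odd `|z|].
   - Strands, red strands and black strands are 0-indexed. *)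

Definition zpar (z : int) : bool := odd `|z|%N.

Definition rho (r : nat) (par : 'I_r -> bool) (R : 'I_r -> seq int)
  (v : 'I_r) (q : int) : nat :=
  count_mem (2 * q + (par v)%:R)%R (R v).

(* a finite window of q's that contains every q with some rho_v(q) > 0 *)
Definition qbound (r : nat) (R : 'I_r -> seq int) : nat :=
  \sum_(v : 'I_r) \sum_(z <- R v) `|z|%N.

Definition qrange (r : nat) (R : 'I_r -> seq int) : seq int :=
  [seq (k%:Z - (qbound R)%:Z)%R | k <- iota 0 (qbound R).*2.+1].

(* The red strands, left to right: (label j_p, longitude r_p), obtained by
   concatenating over increasing q the blocks
   (v_1 repeated rho_{v_1}(q) times, ..., v_r repeated rho_{v_r}(q) times). *)
Definition reds (r : nat) (par : 'I_r -> bool) (R : 'I_r -> seq int)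
  : seq ('I_r * int) :=
  flatten [seq flatten [seq nseq (rho par R v q) (v, (2 * q + (par v)%:R)%R)
                       | v <- enum 'I_r]
          | q <- qrange R].

(* strands: inl k = k-th black strand, inr p = p-th red strand *)
Definition strand := (nat + nat)%type.

(* left-to-right sequence of strands: red strand p lies between the
   kappa(p)-th and (kappa(p)+1)-st black strands (1-indexed as in the paper) *)
Definition strands (n : nat) (kappa : seq nat) : seq strand :=
  flatten [seq [seq (inr p : strand) | p <- iota 0 (size kappa)
                                     & nth 0 kappa p == k]
               ++ (if k < n then [:: (inl k : strand)] else [::])
          | k <- iota 0 n.+1].

Definition is_black (s : strand) : bool := if s is inl _ then true else false.
Definition is_red (s : strand) : bool := ~~ is_black s.

Definition spar (r : nat) (par : 'I_r -> bool) (R : 'I_r -> seq int)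
  (ii : seq 'I_r) (s : strand) : bool :=
  match s with
  | inl k => nth false (map par ii) k
  | inr p => nth false (map (fun x => par x.1) (reds par R)) p
  end.

Definition delta1 (r : nat) (par : 'I_r -> bool) (R : 'I_r -> seq int)
  (ii : seq 'I_r) (s s' : strand) : nat :=
  if is_black s && is_red s' && (spar par R ii s == spar par R ii s') then 2
  else if spar par R ii s != spar par R ii s' then 1 else 0.

Definition pdist (r : nat) (par : 'I_r -> bool) (R : 'I_r -> seq int)
  (ii : seq 'I_r) (S : seq strand) (a b : nat) : nat :=
  \sum_(a <= t < b) delta1 par R ii (nth (inl 0) S t) (nth (inl 0) S t.+1).

Definition longitude (r : nat) (par : 'I_r -> bool) (R : 'I_r -> seq int)
  (p : nat) : int := nth 0%R (map snd (reds par R)) p.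

Definition idem_datum (r : nat) (par : 'I_r -> bool) (R : 'I_r -> seq int)
  (ii : seq 'I_r) (kappa : seq nat) : Prop :=
  [/\ size kappa = size (reds par R),
      all (fun k => k <= size ii) kappa & sorted leq kappa].

Definition parity_datum (r : nat) (par : 'I_r -> bool) (R : 'I_r -> seq int)
  (ii : seq 'I_r) (kappa : seq nat) : Prop :=
  let S := strands (size ii) kappa in
  forall p p', p < p' -> p' < size (reds par R) ->
    (pdist par R ii S (index (inr p : strand) S) (index (inr p' : strand) S)
       <= `|longitude par R p - longitude par R p'|)%N.

Definition compatible_metric_longitude (r : nat) (par : 'I_r -> bool)
  (R : 'I_r -> seq int) (ii : seq 'I_r) (kappa : seq nat) (a : seq int) : Prop :=
  [/\ size a = size ii,
      (forall k, k < size a -> zpar (nth 0%R a k) = nth false (map par ii) k),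
      (forall k, k.+1 < size a -> (nth 0%R a k <= nth 0%R a k.+1)%R) &
      (* 0-indexed black k is the paper's (k+1)-st: a_{k+1} >= r_p iff k+1 > kappa(p) *)
      (forall k p, k < size a -> p < size (reds par R) ->
         (longitude par R p <= nth 0%R a k)%R = (nth 0 kappa p <= k))].

(* Read a compatible metric longitude as an integer value on every strand: a_k on the
   black strand k and r_p on the red strand p.  These values increase weakly from left to
   right, have the parity of their strand, and increase strictly from a black strand to
   any red strand on its right.  Between consecutive strands this forces an increase of at
   least their parity distance, and summing from red strand p to red strand p' gives
   delta(p, p') <= r_p' - r_p.  Conversely, the parity condition says exactly that the
   offsets r_j - delta(0, j), measured from the leftmost strand, increase with j.  Walking
   right from each red strand and adding exactly the parity distance at each step then
   never overtakes the next red strand, so the values read off at the black strands form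
   a compatible metric longitude. *)

From mathcomp Require Import all_boot all_order all_algebra zify.
Import Order.TTheory GRing.Theory Num.Theory.
Set Implicit Arguments. Unset Strict Implicit. Unset Printing Implicit Defensive.

Lemma pairwise_flatten (T : Type) (r : rel T) (ss : seq (seq T)) :
  pairwise (allrel r) ss -> all (pairwise r) ss -> pairwise r (flatten ss).
Proof.
elim: ss => //= s ss IH /andP[rs rss] /andP[ps pss].
rewrite pairwise_cat ps (IH rss pss) !andbT.
elim: ss rs {IH rss pss} => [|s' ss IH] /=; first by rewrite allrel0r.
by move=> /andP[rs' rss]; rewrite allrel_catr rs' IH.
Qed.

Lemma pairwise_iota (r : rel nat) m k :
  (forall i j, m <= i -> i < j -> j < m + k -> r i j) -> pairwise r (iota m k).
Proof.
elim: k m => //= k IH m rij; apply/andP; split.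
  by apply/allP => j; rewrite mem_iota => /andP[? ?]; apply: rij => //; lia.
by apply: IH => i j ? ? ?; apply: rij => //; lia.
Qed.

Lemma pairwise_nseq (T : Type) (r : rel T) n x : r x x -> pairwise r (nseq n x).
Proof.
move=> rxx; elim: n => //= n ->; rewrite andbT.
by elim: n => //= n ->; rewrite rxx.
Qed.

Lemma pairwise_index_ltn (T : eqType) (f : T -> nat) (s : seq T) :
  pairwise (relpre f ltn) s ->
  {in s &, forall x y, (index x s < index y s) = (f x < f y)}.
Proof.
move=> /pairwise_sorted s_sorted x y xs ys.
have tr : transitive (relpre f ltn) by move=> ? ? ? /=; apply: ltn_trans.
have before := sorted_ltn_index tr s_sorted.
apply/idP/idP => [/before|lt_xy]; first exact.
case: ltngtP => // [/(before _ _ ys xs) /= lt_yx | /(congr1 (nth x s))].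
  by have := ltn_trans lt_xy lt_yx; rewrite ltnn.
by rewrite !nth_index // => eq_xy; rewrite eq_xy ltnn in lt_xy.
Qed.

Lemma zpar_addn (n : nat) (z : int) : zpar (n%:Z + z)%R = odd n (+) zpar z.
Proof. rewrite /zpar; lia. Qed.

Lemma zpar_subn (z : int) (n : nat) : zpar (z - n%:Z)%R = zpar z (+) odd n.
Proof. rewrite /zpar; lia. Qed.

Section RedStrands.
Variables (r : nat) (par : 'I_r -> bool) (R : 'I_r -> seq int).

Lemma mem_reds_block q x :
  x \in flatten [seq nseq (rho par R v q) (v, (2 * q + (par v)%:R)%R) | v <- enum 'I_r] ->
  x.2 = (2 * q + (par x.1)%:R)%R.
Proof. by move=> /flatten_mapP[v _]; rewrite mem_nseq => /andP[_ /eqP ->]. Qed.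

Lemma zpar_reds x : x \in reds par R -> zpar x.2 = par x.1.
Proof.
by move=> /flatten_mapP[q _ /mem_reds_block ->]; rewrite /zpar; case: (par x.1); lia.
Qed.

Lemma zpar_longitude p : p < size (reds par R) ->
  zpar (longitude par R p) = nth false [seq par x.1 | x <- reds par R] p.
Proof.
case E: (reds par R) => [//|x0 s] lt_p; rewrite /longitude E -{}E in lt_p *.
by rewrite !(nth_map x0) //; apply/zpar_reds/mem_nth.
Qed.

Hypothesis even_first : forall u v : 'I_r, u < v -> par u -> par v.

Lemma sorted_longitudes : sorted <=%R [seq x.2 | x <- reds par R].
Proof.
rewrite sorted_pairwise; last exact: le_trans.
rewrite pairwise_map; apply: pairwise_flatten.
  rewrite pairwise_map pairwise_map; apply: pairwise_iota => i j _ lt_ij _.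
  by apply/allrelP => x y /mem_reds_block Ex /mem_reds_block Ey /=; rewrite Ex Ey; lia.
apply/allP => _ /mapP[q _ ->]; apply: pairwise_flatten; last first.
  by apply/allP => _ /mapP[v _ ->]; apply/pairwise_nseq/lexx.
rewrite pairwise_map.
have : pairwise (relpre val ltn) (enum 'I_r).
  by rewrite -pairwise_map val_enum_ord; apply: pairwise_iota.
apply: sub_pairwise => v v' /= lt_vv'.
apply/allrelP => x y; rewrite !mem_nseq => /andP[_ /eqP ->] /andP[_ /eqP ->] /=.
by case: (par v) (par v') (even_first lt_vv') => -[] /= par_vv'; try lia; have := par_vv' isT.
Qed.

Lemma longitude_mono p p' : p <= p' -> p' < size (reds par R) ->
  (longitude par R p <= longitude par R p')%R.
Proof.
move=> le_pp' lt_p'; rewrite /longitude.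
by apply: (sorted_leq_nth le_trans lexx _ sorted_longitudes); rewrite // inE size_map //; lia.
Qed.

End RedStrands.

Section ParityDistance.
Variables (r : nat) (par : 'I_r -> bool) (R : 'I_r -> seq int).
Variables (ii : seq 'I_r) (S : seq strand).

Local Notation spar := (spar par R ii).
Local Notation delta1 := (delta1 par R ii).
Local Notation pdist := (pdist par R ii S).
Local Notation strand_at t := (nth (inl 0) S t).

Lemma odd_delta1 s s' : odd (delta1 s s') = spar s (+) spar s'.
Proof.
by rewrite /delta1; case: (is_black s) (is_red s') (spar s) (spar s') => -[] [] [].
Qed.

Lemma delta1_le (u w : int) s s' :
  zpar u = spar s -> zpar w = spar s' -> (u <= w)%R ->
  (is_black s -> is_red s' -> u < w)%R -> (u + (delta1 s s')%:Z <= w)%R.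
Proof.
rewrite /delta1 /zpar.
case: (is_black s) (is_red s') (spar s) (spar s') => -[] [] [] /= zu zw le_uw lt_uw;
  try have := lt_uw isT isT; lia.
Qed.

Lemma pdist_split a b c : a <= b -> b <= c -> pdist a c = pdist a b + pdist b c.
Proof. by move=> le_ab le_bc; rewrite /pdist -big_cat_nat. Qed.

Lemma odd_pdist a b : a <= b -> odd (pdist a b) = spar (strand_at a) (+) spar (strand_at b).
Proof.
elim: b => [|b IH]; first by rewrite leqn0 => /eqP ->; rewrite /pdist big_geq ?addbb.
rewrite leq_eqVlt => /orP[/eqP ->|lt_ab]; first by rewrite /pdist big_geq ?addbb.
rewrite /pdist big_nat_recr //= oddD -/(pdist a b) IH // odd_delta1.
by case: (spar (strand_at a)) (spar (strand_at b)) (spar (strand_at b.+1)) => -[] [].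
Qed.

Lemma pdist_gt0 a b : a < b -> is_black (strand_at a) -> is_red (strand_at b) -> 0 < pdist a b.
Proof.
elim: b => // b IH lt_ab black_a red_b.
rewrite /pdist big_nat_recr //= -/(pdist a b) addn_gt0.
case black_b: (is_black (strand_at b)).
  by rewrite /delta1 black_b red_b /=; case: eqP; rewrite ?orbT.
rewrite IH // ?/is_red ?black_b //.
by move: lt_ab; rewrite ltnS leq_eqVlt => /orP[/eqP eq_ab|//]; rewrite eq_ab black_b in black_a.
Qed.

Lemma pdist_chain (val : nat -> int) a b : a <= b ->
  (forall t, (a <= t < b)%N ->
     val t + (delta1 (strand_at t) (strand_at t.+1))%:Z <= val t.+1)%R ->
  (val a + (pdist a b)%:Z <= val b)%R.
Proof.
move=> le_ab step; rewrite -lerBrDl -telescope_sumr // /pdist.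
rewrite (big_morph Posz PoszD (erefl (Posz 0))) ler_sum_nat // => t /step.
by rewrite lerBrDl.
Qed.

End ParityDistance.

Section StrandOrder.
Variable kappa : seq nat.

(* Block k holds the red strands p with kappa p = k, followed by the black strand k;
   [strand_key] orders strands lexicographically by (block, slot in the block). *)
Definition strand_key (s : strand) : nat :=
  let l := size kappa in
  match s with inl k => k * l.+1 + l | inr p => nth 0 kappa p * l.+1 + p end.

Lemma ltn_key_black_black k k' :
  (strand_key (inl k) < strand_key (inl k')) = (k < k').
Proof. by rewrite /= ltn_add2r ltn_pmul2r. Qed.

Lemma ltn_key_black_red k p : p < size kappa ->
  (strand_key (inl k) < strand_key (inr p)) = (k < nth 0 kappa p).
Proof. by move=> lt_p /=; apply/idP/idP; nia. Qed.

Lemma ltn_key_red_black k p : p < size kappa ->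
  (strand_key (inr p) < strand_key (inl k)) = (nth 0 kappa p <= k).
Proof. by move=> lt_p /=; apply/idP/idP; nia. Qed.

Lemma ltn_key_red_red p p' : sorted leq kappa -> p < size kappa -> p' < size kappa ->
  (strand_key (inr p) < strand_key (inr p')) = (p < p').
Proof.
move=> kappa_sorted.
have kappa_mono q q' : q <= q' -> q' < size kappa -> nth 0 kappa q <= nth 0 kappa q'.
  by move=> ? ?; apply: (sorted_leq_nth leq_trans leqnn) => //; rewrite inE; lia.
move=> lt_p lt_p' /=; case: (ltnP p p') => [lt_pp'|le_p'p].
  by have := kappa_mono _ _ (ltnW lt_pp') lt_p'; nia.
by have := kappa_mono _ _ le_p'p lt_p; nia.
Qed.

Lemma mem_strands n s : all (fun k => k <= n) kappa ->
  (s \in strands n kappa) = match s with inl k => k < n | inr p => p < size kappa end.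
Proof.
move=> kappa_le; apply/flatten_mapP/idP.
  case=> k; rewrite mem_iota => /andP[_ lt_k]; rewrite mem_cat => /orP[/mapP[p]|].
    by rewrite mem_filter mem_iota => /andP[_ /andP[_ ?]] ->.
  by case: ifP => // ?; rewrite inE => /eqP ->.
case: s => [k|p] lt_s.
  by exists k; rewrite ?mem_iota ?mem_cat ?lt_s ?inE ?eqxx ?orbT //; lia.
exists (nth 0 kappa p); first by rewrite mem_iota ltnS (allP kappa_le) ?mem_nth.
by rewrite mem_cat map_f // mem_filter eqxx mem_iota.
Qed.

Lemma strands_pairwise n :
  sorted leq kappa -> pairwise (relpre strand_key ltn) (strands n kappa).
Proof.
move=> kappa_sorted.
pose block k := [seq (inr p : strand) | p <- iota 0 (size kappa) & nth 0 kappa p == k]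
                ++ (if k < n then [:: (inl k : strand)] else [::]).
have key_block k s : s \in block k ->
    k * (size kappa).+1 <= strand_key s <= k * (size kappa).+1 + size kappa.
  rewrite mem_cat => /orP[/mapP[p]|].
    by rewrite mem_filter mem_iota => /andP[/eqP <- ?] -> /=; lia.
  by case: ifP => // _; rewrite inE => /eqP -> /=; lia.
apply: pairwise_flatten.
  rewrite pairwise_map; apply: pairwise_iota => k k' _ lt_kk' _.
  by apply/allrelP => x y /key_block ? /key_block ?; rewrite /=; nia.
apply/allP => _ /mapP[k _ ->]; rewrite pairwise_cat; apply/and3P; split.
- apply/allrelP => x y /mapP[p]; rewrite mem_filter mem_iota => /andP[/eqP kp ?] ->.
  by case: ifP => // _; rewrite inE => /eqP -> /=; rewrite kp; lia.
- rewrite pairwise_map; apply/pairwise_filter/pairwise_iota => p p' _ ? ?.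
  by change (strand_key (inr p) < strand_key (inr p')); rewrite ltn_key_red_red //; lia.
- by case: ifP.
Qed.

End StrandOrder.

Section CompatibleIffParity.
Variables (r : nat) (par : 'I_r -> bool) (R : 'I_r -> seq int).
Hypothesis even_first : forall u v : 'I_r, u < v -> par u -> par v.
Variables (ii : seq 'I_r) (kappa : seq nat).
Hypotheses (size_kappa : size kappa = size (reds par R))
  (kappa_le : all (fun k => k <= size ii) kappa) (kappa_sorted : sorted leq kappa).

Local Notation S := (strands (size ii) kappa).
Local Notation key := (strand_key kappa).
Local Notation strand_at t := (nth (inl 0) S t).
Local Notation delta1 := (delta1 par R ii).

Lemma index_strands_ltn : {in S &, forall x y, (index x S < index y S) = (key x < key y)}.
Proof. exact: pairwise_index_ltn (strands_pairwise _ kappa_sorted). Qed.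

Lemma ltn_key_strand_at t : t.+1 < size S -> key (strand_at t) < key (strand_at t.+1).
Proof.
have S_uniq : uniq S by apply: pairwise_uniq (strands_pairwise _ kappa_sorted) => s; exact: ltnn.
move=> lt_t; rewrite -index_strands_ltn ?mem_nth // ?(ltnW lt_t) //.
by rewrite !index_uniq // ltnW.
Qed.

Section Forward.
Variable a : seq int.
Hypothesis a_compat : compatible_metric_longitude par R ii kappa a.

Definition strand_value (s : strand) : int :=
  match s with inl k => nth 0%R a k | inr p => longitude par R p end.

Lemma zpar_strand_value s : s \in S -> zpar (strand_value s) = spar par R ii s.
Proof.
case: a_compat => size_a a_par _ _; rewrite mem_strands //.
case: s => [k|p] lt_s /=; first by rewrite a_par ?size_a.
by rewrite zpar_longitude -?size_kappa.
Qed.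

Lemma strand_value_mono x y : x \in S -> y \in S -> key x < key y ->
  (strand_value x <= strand_value y)%R /\
  (is_black x -> is_red y -> strand_value x < strand_value y)%R.
Proof.
case: a_compat => size_a _ /(sortedP 0%R) a_sorted a_sep.
have a_mono k k' : k <= k' -> k' < size a -> (nth 0 a k <= nth 0 a k')%R.
  move=> le_kk' lt_k'; apply: (sorted_leq_nth le_trans lexx _ a_sorted) => //.
  by rewrite inE (leq_ltn_trans le_kk').
rewrite !mem_strands //; case: x => [k|p]; case: y => [k'|p'] /= xS yS.
- by rewrite ltn_key_black_black => ?; split => //; apply: a_mono; lia.
- rewrite ltn_key_black_red // => lt_k.
  have : (longitude par R p' <= nth 0 a k)%R = false.
    by rewrite a_sep ?size_a -?size_kappa //; apply/negbTE; rewrite -ltnNge.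
  by move/negbT; rewrite -ltNge => lt_ap; split => //; apply: ltW.
- by rewrite ltn_key_red_black // => le_pk; rewrite a_sep ?size_a -?size_kappa.
- rewrite ltn_key_red_red // => lt_pp'; split => //.
  by apply: longitude_mono; rewrite -?size_kappa //; apply: ltnW.
Qed.

Lemma strand_value_step t : t.+1 < size S ->
  (strand_value (strand_at t) + (delta1 (strand_at t) (strand_at t.+1))%:Z
     <= strand_value (strand_at t.+1))%R.
Proof.
move=> lt_t; have xS : strand_at t \in S by rewrite mem_nth // ltnW.
have yS : strand_at t.+1 \in S by rewrite mem_nth.
have [le_xy lt_xy] := strand_value_mono xS yS (ltn_key_strand_at lt_t).
by apply: delta1_le; rewrite ?zpar_strand_value.
Qed.

Lemma parity_datum_of_compatible : parity_datum par R ii kappa.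
Proof.
move=> p p' lt_pp' lt_p'.
have pS : (inr p : strand) \in S by rewrite mem_strands // size_kappa; lia.
have p'S : (inr p' : strand) \in S by rewrite mem_strands // size_kappa.
have le_pp' : index (inr p : strand) S <= index (inr p' : strand) S.
  by rewrite ltnW // index_strands_ltn // ltn_key_red_red // size_kappa; lia.
have := @pdist_chain _ par R ii S (fun t => strand_value (strand_at t)) _ _ le_pp'.
rewrite !nth_index //= => /(_ _)/Wrap[t /andP[_ lt_t]|].
  by apply/strand_value_step/(leq_ltn_trans lt_t); rewrite index_mem.
have := longitude_mono even_first (ltnW lt_pp') lt_p'; lia.
Qed.

End Forward.

Section Backward.
Hypothesis parity : parity_datum par R ii kappa.

Local Notation pdist0 t := (pdist par R ii S 0 t).
Local Notation red_at p := (index (inr p : strand) S).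

Definition red_offset j : int :=
  if j < size kappa then (longitude par R j - (pdist0 (red_at j))%:Z)%R
  else Posz (spar par R ii (strand_at 0)). (* with no red strand, only parity matters *)

(* An empty max is 0, so left of the first red strand the values are read backwards from r_0. *)
Definition last_red t := \max_(j <- iota 0 (size kappa) | red_at j <= t) j.

Definition metric_value t : int := ((pdist0 t)%:Z + red_offset (last_red t))%R.

Lemma red_at_ltn p p' : p < size kappa -> p' < size kappa -> (red_at p < red_at p') = (p < p').
Proof. by move=> lt_p lt_p'; rewrite index_strands_ltn ?mem_strands // ltn_key_red_red. Qed.

Lemma red_offset_mono j j' : j <= j' -> j' < size kappa -> (red_offset j <= red_offset j')%R.
Proof.
rewrite leq_eqVlt => /orP[/eqP -> //|lt_jj' lt_j'].
have le_at : red_at j <= red_at j' by rewrite ltnW // red_at_ltn //; lia.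
have := parity lt_jj'; rewrite -size_kappa => /(_ lt_j').
have := longitude_mono (R := R) even_first (ltnW lt_jj'); rewrite -size_kappa => /(_ lt_j').
rewrite /red_offset lt_j' (ltn_trans lt_jj' lt_j') (pdist_split _ _ _ _ (leq0n _) le_at).
lia.
Qed.

Lemma last_red_lt t : 0 < size kappa -> last_red t < size kappa.
Proof.
move=> kappa_gt0; rewrite -(prednK kappa_gt0) ltnS; apply/bigmax_leqP_seq => j.
by rewrite mem_iota => /andP[_ lt_j] _; rewrite -ltnS prednK.
Qed.

Lemma last_red_mono : {homo last_red : t t' / t <= t'}.
Proof.
move=> t t' le_tt'; apply/bigmax_leqP_seq => j j_in le_jt.
by apply: (leq_bigmax_seq (F := id)) => //; apply: leq_trans le_tt'.
Qed.

Lemma last_red_at p : p < size kappa -> last_red (red_at p) = p.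
Proof.
move=> lt_p; apply/eqP; rewrite eqn_leq; apply/andP; split.
  apply/bigmax_leqP_seq => j; rewrite mem_iota => /andP[_ lt_j] le_at.
  by rewrite leqNgt -(red_at_ltn lt_p lt_j) -leqNgt.
by apply: (leq_bigmax_seq (F := id)); rewrite ?mem_iota.
Qed.

Lemma metric_value_step t :
  (metric_value t + (delta1 (strand_at t) (strand_at t.+1))%:Z <= metric_value t.+1)%R.
Proof.
have le_offset : (red_offset (last_red t) <= red_offset (last_red t.+1))%R.
  case: (posnP (size kappa)) => [kappa0|kappa_gt0]; first by rewrite /red_offset kappa0.
  by apply: red_offset_mono; [apply: last_red_mono | apply: last_red_lt].
rewrite /metric_value /pdist big_nat_recr //= -/(pdist par R ii S 0 t) PoszD.
lia.
Qed.

Lemma zpar_metric_value t : zpar (metric_value t) = spar par R ii (strand_at t).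
Proof.
have zpar_offset j : zpar (red_offset j) = spar par R ii (strand_at 0).
  rewrite /red_offset; case: ifP => lt_j; last by rewrite /zpar; case: (spar _ _ _ _).
  have jS : (inr j : strand) \in S by rewrite mem_strands.
  rewrite zpar_subn zpar_longitude -?size_kappa // odd_pdist // nth_index //=.
  by case: (nth false _ j) (spar _ _ _ _) => -[].
rewrite /metric_value zpar_addn zpar_offset odd_pdist //.
by case: (spar _ _ _ (strand_at 0)) (spar _ _ _ (strand_at t)) => -[].
Qed.

Lemma metric_value_red p : p < size kappa -> metric_value (red_at p) = longitude par R p.
Proof. by move=> lt_p; rewrite /metric_value last_red_at // /red_offset lt_p addrC subrK. Qed.

Lemma compatible_of_parity_datum :
  exists a, compatible_metric_longitude par R ii kappa a.
Proof.
have chain u v : u <= v -> (metric_value u + (pdist par R ii S u v)%:Z <= metric_value v)%R.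
  by move=> le_uv; apply: pdist_chain => // t _; apply: metric_value_step.
have black_in k : k < size ii -> (inl k : strand) \in S by move=> lt_k; rewrite mem_strands.
exists (mkseq (fun k => metric_value (index (inl k : strand) S)) (size ii)).
split=> [|k|k|k p]; rewrite size_mkseq.
- by [].
- by move=> lt_k; rewrite nth_mkseq // zpar_metric_value nth_index ?black_in.
- move=> lt_k; have lt_k' := ltnW lt_k; rewrite !nth_mkseq //.
  have lt_kk' : index (inl k : strand) S < index (inl k.+1 : strand) S.
    by rewrite index_strands_ltn ?ltn_key_black_black //; exact: black_in.
  by have := chain _ _ (ltnW lt_kk'); lia.
- move=> lt_k; rewrite -size_kappa nth_mkseq // => lt_p.
  have pS : (inr p : strand) \in S by rewrite mem_strands.
  have kS := black_in k lt_k.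
  case: leqP => [le_pk | lt_kp].
    have le_at : red_at p <= index (inl k : strand) S.
      by rewrite ltnW // index_strands_ltn // ltn_key_red_black.
    by have := chain _ _ le_at; rewrite metric_value_red //; lia.
  have lt_at : index (inl k : strand) S < red_at p.
    by rewrite index_strands_ltn // ltn_key_black_red.
  have := pdist_gt0 par R ii (S := S) lt_at; rewrite !nth_index // => /(_ isT isT).
  by have := chain _ _ (ltnW lt_at); rewrite metric_value_red //; lia.
Qed.

End Backward.

End CompatibleIffParity.

Unset Implicit Arguments.

Theorem lemma3p25
  (r : nat) (par : 'I_r -> bool) (e : rel 'I_r)
  (e_sym : symmetric e) (e_irr : irreflexive e)
  (e_bip : forall u v : 'I_r, e u v -> par u != par v)
  (even_first : forall u v : 'I_r, (u < v)%N -> par u -> par v)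
  (R : 'I_r -> seq int)
  (R_par : forall v : 'I_r, all (fun z => zpar z == par v) (R v))
  (ii : seq 'I_r) (kappa : seq nat)
  (Hdatum : idem_datum par R ii kappa) :
  (exists a : seq int, compatible_metric_longitude par R ii kappa a)
  <-> parity_datum par R ii kappa.
Proof.
case: Hdatum => size_kappa kappa_le kappa_sorted; split.
  by case=> a; apply: parity_datum_of_compatible.
exact: compatible_of_parity_datum.
Qed.
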